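(* Let $n=2^s$, $q=2^r$ ($s,r$ positive integers). The map $\mathbb{F}_q\to C^{\perp}(SL(n,q))$, $a\mapsto c(a)=(tr(a\,Tr(g_1)),\dots,tr(a\,Tr(g_N)))$, is an $\mathbb{F}_2$-linear isomorphism.
   Context: $\mathbb{F}_q$ is the field with $q$ elements and $tr:\mathbb{F}_q\to\mathbb{F}_2$ the absolute trace. $N=|SL(n,q)|$, $g_1,\dots,g_N$ is a fixed ordering of $SL(n,q)$, $Tr$ is the matrix trace, $v=(Tr(g_1),\dots,Tr(g_N))\in\mathbb{F}_q^N$, $C(SL(n,q))=\{u\in\mathbb{F}_2^N:u\cdot v=0\}$ (dot product in $\mathbb{F}_q$), and $C^\perp(SL(n,q))$ is its dual in $\mathbb{F}_2^N$ under the standard inner product. *)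

From HB Require Import structures.
From mathcomp Require Import all_boot all_order all_algebra all_fingroup all_field.
Set Implicit Arguments. Unset Strict Implicit. Unset Printing Implicit Defensive.
Import GRing.Theory.
Local Open Scope ring_scope.

(* SL(n,F): the finite type of n x n matrices over F of determinant 1.
   The fixed ordering g_1..g_N of the paper is replaced by indexing
   vectors of F_2^N by the finite type SL n F itself. *)
Notation SL n F := {A : 'M[F]_n | \det A == 1}.

Definition f2F {F : finFieldType} (b : 'F_2) : F := (val b)%:R.

(* absolute trace F_q -> F_2 for q = 2^r: tr x = sum_{i<r} x^(2^i),
   which lies in {0,1}; we return it as an element of 'F_2 *)
Definition trF (F : finFieldType) (r : nat) (x : F) : F :=
  \sum_(i < r) x ^+ (2 ^ i).
Definition abstr (F : finFieldType) (r : nat) (x : F) : 'F_2 :=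
  if trF r x == 0 then 0 else 1.

Definition codeC (n : nat) (F : finFieldType) : {set {ffun SL n F -> 'F_2}} :=
  [set u : {ffun SL n F -> 'F_2} | \sum_(g : SL n F) f2F (u g) * \tr (val g) == 0].

Definition codeCperp (n : nat) (F : finFieldType) : {set {ffun SL n F -> 'F_2}} :=
  [set w : {ffun SL n F -> 'F_2} | [forall u in codeC n F, \sum_(g : SL n F) u g * w g == 0]].

Definition cword (n r : nat) (F : finFieldType) (a : F) : {ffun SL n F -> 'F_2} :=
  [ffun g => abstr r (a * \tr (val g))].

From mathcomp Require Import all_boot all_order all_algebra all_fingroup all_field.
Set Implicit Arguments. Unset Strict Implicit. Unset Printing Implicit Defensive.
Import GRing.Theory.
Local Open Scope ring_scope.

(* The absolute trace [tr] is F_2-linear, and the trace form (a, x) |-> tr (a x)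
   is nondegenerate because [tr] is a polynomial of degree 2^(r-1) < q, so it
   cannot vanish on all of F_q.  Every element of F_q is the trace of a matrix
   of SL(n, q), so the labelling g |-> Tr g is onto F_q.  Hence c(a) . u =
   tr (a sum_g u_g Tr g) = 0 for u in C, c is injective, and a word w of C^perp
   is F_2-linear in Tr g: it is determined by its values at r elements whose
   traces form an F_2-basis of F_q.  Thus |C^perp| <= q = |image of c|. *)

Lemma F2_eq01 (b : 'F_2) : b = 0 \/ b = 1.
Proof. by case: b => [[|[|//]] ?]; [left | right]; apply/val_inj. Qed.

Section EmbeddingF2.
Variables (F : finFieldType) (charF2 : 2 \in [pchar F]).

Lemma f2F_inj : injective (@f2F F).
Proof.
have f2F01 : f2F (0 : 'F_2) != f2F (1 : 'F_2) :> F by rewrite /f2F /= eq_sym oner_neq0.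
move=> a b; case: (F2_eq01 a) (F2_eq01 b) => -> [] -> //= /eqP.
  by rewrite (negbTE f2F01).
by rewrite eq_sym (negbTE f2F01).
Qed.

Lemma f2FD (a b : 'F_2) : f2F (a + b) = f2F a + f2F b :> F.
Proof. by rewrite /f2F -natrD -(GRing.natr_mod_pchar charF2 (a + b)). Qed.

Lemma f2FM (a b : 'F_2) : f2F (a * b) = f2F a * f2F b :> F.
Proof. by rewrite /f2F -natrM -(GRing.natr_mod_pchar charF2 (a * b)). Qed.

Lemma f2F_sum (I : finType) (G : I -> 'F_2) :
  f2F (\sum_i G i) = \sum_i f2F (G i) :> F.
Proof. exact: (big_morph _ f2FD). Qed.

Lemma f2F_nat (m : nat) : f2F (m%:R : 'F_2) = m%:R :> F.
Proof.
by rewrite /f2F -(GRing.natr_mod_pchar charF2 m); congr _%:R; exact: val_Fp_nat.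
Qed.

Lemma F2_coordinates : exists d (e : 'I_d -> F) (coord : F -> 'I_d -> 'F_2),
  #|F| = (2 ^ d)%N /\ forall x, x = \sum_i f2F (coord x i) * e i.
Proof.
pose V := pPrimeCharType charF2; pose E := vbasis (fullv : {vspace V}).
exists (\dim (fullv : {vspace V})), (fun i => E`_i), (fun x i => coord E i (x : V)).
split=> [|x]; first by rewrite pprimeChar_dimf -card_pprimeChar.
exact: (coord_vbasis (memvf (x : V))).
Qed.

End EmbeddingF2.

Section AbsoluteTrace.
Variables (r : nat) (F : finFieldType).
Hypotheses (r_gt0 : (0 < r)%N) (cardF : #|F| = (2 ^ r)%N).

Lemma pchar2F : 2 \in [pchar F].
Proof. exact: card_finPcharP cardF _. Qed.

Lemma exprD_pow2 (x y : F) i : (x + y) ^+ (2 ^ i) = x ^+ (2 ^ i) + y ^+ (2 ^ i).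
Proof. by rewrite exprDn_pchar // pnatX pnatE ?pchar2F. Qed.

Lemma trFD (x y : F) : trF r (x + y) = trF r x + trF r y.
Proof. by rewrite /trF -big_split; apply: eq_bigr => i _; rewrite exprD_pow2. Qed.

(* Squaring shifts the Frobenius orbit, and x ^+ (2 ^ r) = x closes it. *)
Lemma trF_sqr (x : F) : trF r x ^+ 2 = trF r x.
Proof.
have sqrD : {morph (fun z : F => z ^+ 2) : a b / a + b}.
  by move=> a b; have := exprD_pow2 a b 1; rewrite expn1.
rewrite /trF (big_morph _ sqrD (expr0n F 2)).
under eq_bigr => i _ do rewrite -exprM -expnSr.
have xq : x ^+ (2 ^ r) = x by rewrite -cardF expf_card.
move: xq; rewrite -(prednK r_gt0) => xq.
rewrite big_ord_recr /= xq [RHS]big_ord_recl /= expn0 expr1 addrC.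
by congr (_ + _); apply: eq_bigr.
Qed.

Lemma trF01 (x : F) : trF r x = 0 \/ trF r x = 1.
Proof.
have /eqP := trF_sqr x; rewrite expr2 -subr_eq0 -{3}[trF r x]mulr1 -mulrBr.
by rewrite mulf_eq0 subr_eq0 => /orP[] /eqP ->; [left | right].
Qed.

Lemma f2F_abstr (x : F) : f2F (abstr r x) = trF r x.
Proof. by rewrite /abstr; case: (trF01 x) => ->; rewrite ?eqxx ?oner_eq0. Qed.

Lemma abstrD (x y : F) : abstr r (x + y) = abstr r x + abstr r y.
Proof. by apply: (@f2F_inj F); rewrite (f2FD pchar2F) !f2F_abstr trFD. Qed.

Lemma abstr0 : abstr r (0 : F) = 0.
Proof. by apply: (addrI (abstr r (0 : F))); rewrite addr0 -abstrD addr0. Qed.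

Lemma abstr_sum (I : finType) (G : I -> F) :
  abstr r (\sum_i G i) = \sum_i abstr r (G i).
Proof. exact: (big_morph _ abstrD abstr0). Qed.

Lemma abstr_f2FM (b : 'F_2) (y : F) : abstr r (f2F b * y) = b * abstr r y.
Proof.
case: (F2_eq01 b) => ->; rewrite [f2F _]/f2F /=; last by rewrite !mul1r.
by rewrite !mul0r abstr0.
Qed.

(* [trF r] is evaluation of a nonzero polynomial of degree 2 ^ (r - 1) < #|F|. *)
Lemma trF_neq0 : exists y : F, trF r y != 0.
Proof.
pose P : {poly F} := \sum_(i < r) 'X^(2 ^ i).
have P_neq0 : P != 0.
  apply: contra_neq (@oner_neq0 F) => P0; rewrite -[RHS](coef0 F 1) -P0.
  rewrite coef_sum (bigD1 (Ordinal r_gt0)) //= coefXn eqxx big1 ?addr0 // => i.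
  rewrite coefXn -val_eqE /= eq_sym -{1}(expn0 2) eqn_exp2l // => /negbTE->.
  by rewrite mulr0n.
have sizeP : (size P <= 2 ^ r)%N.
  have half_lt : ((2 ^ r.-1).+1 <= 2 ^ r)%N.
    by rewrite -{2}(prednK r_gt0) expnS mul2n -addnn -add1n leq_add2r expn_gt0.
  apply: leq_trans (size_sum _ _ _) (leq_trans _ half_lt).
  apply/bigmax_leqP => i _.
  by rewrite size_polyXn ltnS leq_exp2l // -ltnS prednK.
suff /existsP[y Py] : [exists y : F, ~~ root P y].
  by exists y; move: Py; rewrite /root horner_sum; under eq_bigr do rewrite hornerXn.
rewrite -negb_forall; apply/forallP => /= rootP.
have rootsP : all (root P) (enum F) by apply/allP => y _; apply: rootP.
have := max_poly_roots P_neq0 rootsP (enum_uniq F).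
by rewrite -cardE cardF ltnNge sizeP.
Qed.

Lemma trF_nondeg (a : F) : (forall x, trF r (a * x) = 0) -> a = 0.
Proof.
move=> trF_a0; apply: contraPeq trF_neq0 => a_neq0 [y].
by rewrite -(mulVKf a_neq0 y) trF_a0 eqxx.
Qed.

End AbsoluteTrace.

Lemma sum_pred1_mul (R : pzSemiRingType) (T : finType) (g : T) (v : T -> R) :
  \sum_x (x == g)%:R * v x = v g.
Proof.
rewrite (bigD1 g) //= eqxx mul1r big1 ?addr0 // => x /negbTE->.
exact: mul0r.
Qed.

Lemma sum_indicator_comb_mul (R : pzSemiRingType) (I T : finType)
    (g : T) (h : I -> T) (c : I -> R) (v : T -> R) :
  \sum_x ((x == g)%:R + \sum_i c i * (x == h i)%:R) * v x
    = v g + \sum_i c i * v (h i).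
Proof.
under eq_bigr => x _ do rewrite mulrDl mulr_suml.
rewrite big_split /= sum_pred1_mul exchange_big /=; congr (_ + _).
by apply: eq_bigr => i _; under eq_bigr do rewrite -mulrA; rewrite -mulr_sumr sum_pred1_mul.
Qed.

Section TraceLabelledCode.
Variables (r : nat) (F : finFieldType) (T : finType) (tau : T -> F).
Hypotheses (r_gt0 : (0 < r)%N) (cardF : #|F| = (2 ^ r)%N).
Hypothesis tau_surj : forall t, exists g, tau g = t.

Definition labelCode : {set {ffun T -> 'F_2}} :=
  [set u : {ffun T -> 'F_2} | \sum_g f2F (u g) * tau g == 0].

Definition dualCode (C : {set {ffun T -> 'F_2}}) : {set {ffun T -> 'F_2}} :=
  [set w : {ffun T -> 'F_2} | [forall u in C, \sum_g u g * w g == 0]].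

Definition traceWord (a : F) : {ffun T -> 'F_2} := [ffun g => abstr r (a * tau g)].

Lemma traceWordD (a b : F) : traceWord (a + b) = traceWord a + traceWord b.
Proof. by apply/ffunP => g; rewrite !ffunE mulrDl abstrD. Qed.

Lemma traceWord_inj : injective traceWord.
Proof.
move=> a b eq_ab; apply/eqP; rewrite -subr_eq0; apply/eqP.
apply: (trF_nondeg r_gt0 cardF) => x; have [g <-] := tau_surj x.
have /(congr1 (@f2F F)) := congr1 (fun w : {ffun T -> 'F_2} => w g) eq_ab.
rewrite !ffunE !f2F_abstr // mulrBl trFD // => ->.
by rewrite (oppr_pchar2 (pchar2F cardF)) (addrr_pchar2 (pchar2F cardF)).
Qed.

Lemma traceWord_dual (a : F) : traceWord a \in dualCode labelCode.
Proof.
rewrite inE; apply/forall_inP => u; rewrite inE => /eqP u_tau.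
under eq_bigr => g _ do rewrite ffunE -abstr_f2FM // mulrCA.
by rewrite -abstr_sum // -mulr_sumr u_tau mulr0 abstr0.
Qed.

Lemma dual_labelCode_relation (w : {ffun T -> 'F_2}) (I : finType)
    (h : I -> T) (c : I -> 'F_2) (g : T) :
  w \in dualCode labelCode ->
  tau g = \sum_i f2F (c i) * tau (h i) -> w g = \sum_i c i * w (h i).
Proof.
have charF2 := pchar2F cardF.
move=> w_dual tau_g.
pose u : {ffun T -> 'F_2} := [ffun x => (x == g)%:R + \sum_i c i * (x == h i)%:R].
have u_code : u \in labelCode.
  have f2F_u x : f2F (u x) = (x == g)%:R + \sum_i f2F (c i) * (x == h i)%:R :> F.
    rewrite /u ffunE (f2FD charF2) (f2F_sum charF2) (f2F_nat charF2); congr (_ + _).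
    by apply: eq_bigr => i _; rewrite (f2FM charF2) (f2F_nat charF2).
  rewrite inE; under eq_bigr do rewrite f2F_u.
  by rewrite sum_indicator_comb_mul -tau_g (addrr_pchar2 charF2).
move: w_dual; rewrite inE => /forall_inP/(_ u u_code).
under eq_bigr do rewrite /u ffunE.
rewrite sum_indicator_comb_mul addr_eq0 => /eqP->.
exact: (oppr_pchar2 (pchar_Fp (isT : prime 2))).
Qed.

Lemma card_dual_labelCode : (#|dualCode labelCode| <= #|F|)%N.
Proof.
have [d [e [coord [cardFd decomp]]]] := F2_coordinates (pchar2F cardF).
have hP i : exists g, tau g == e i by have [g <-] := tau_surj (e i); exists g.
pose h i := xchoose (hP i).
have tau_h i : tau (h i) = e i := eqP (xchooseP (hP i)).
pose restr (w : {ffun T -> 'F_2}) : {ffun 'I_d -> 'F_2} := [ffun i => w (h i)].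
have restr_inj : {in dualCode labelCode &, injective restr}.
  move=> w1 w2 w1_dual w2_dual eq_restr; apply/ffunP => g.
  have tau_g : tau g = \sum_i f2F (coord (tau g) i) * tau (h i).
    by rewrite {1}(decomp (tau g)); under [RHS]eq_bigr do rewrite tau_h.
  rewrite (dual_labelCode_relation w1_dual tau_g).
  rewrite (dual_labelCode_relation w2_dual tau_g).
  apply: eq_bigr => i _; congr (_ * _).
  by have := congr1 (fun f : {ffun 'I_d -> 'F_2} => f i) eq_restr; rewrite !ffunE.
have card_restr : #|{ffun 'I_d -> 'F_2}| = (2 ^ d)%N.
  by rewrite card_ffun card_Fp // card_ord.
by rewrite -(card_in_imset restr_inj) cardFd -card_restr max_card.
Qed.

Lemma dual_labelCodeE : dualCode labelCode = [set traceWord a | a : F].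
Proof.
apply/eqP; rewrite eq_sym eqEcard card_imset; last exact: traceWord_inj.
rewrite card_dual_labelCode andbT.
by apply/subsetP => _ /imsetP[a _ ->]; apply: traceWord_dual.
Qed.

End TraceLabelledCode.

Lemma SL_tr_surj (R : comNzRingType) (m : nat) (t : R) :
  exists g : SL m.+2 R, \tr (val g) = t.
Proof.
(* diag(B, 1) with B the companion matrix of X^2 - (t - m) X + 1. *)
pose B : 'M[R]_2 := \matrix_(i, j) if i == 0 then (if j == 0 then t - m%:R else -1)
                                  else (if j == 0 then 1 else 0).
have detB : \det B = 1.
  rewrite (expand_det_row B 1) !big_ord_recl big_ord0 /cofactor !det_mx11 !mxE /=.
  by rewrite mul0r add0r addr0 mul1r (_ : 1 %% 2 + 0 = 1)%N // expr1 mulN1r opprK.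
have trB : \tr B = t - m%:R.
  by rewrite /mxtrace !big_ord_recl big_ord0 !mxE /= !addr0.
pose A := block_mx B 0 0 (1%:M : 'M[R]_m).
have detA : \det A == 1 by rewrite det_ublock detB det1 mulr1.
have trA : \tr A = t by rewrite mxtrace_block trB mxtrace1 subrK.
by exists (exist _ A detA).
Qed.

Lemma SL_pow2_tr_surj (R : comNzRingType) (s : nat) (t : R) :
  (0 < s)%N -> exists g : SL (2 ^ s) R, \tr (val g) = t.
Proof.
move=> s_gt0; have [m ->] : exists m, (2 ^ s = m.+2)%N.
  have two_le : (2 <= 2 ^ s)%N by rewrite -{1}(expn1 2) leq_exp2l.
  by exists (2 ^ s - 2)%N; rewrite -[in LHS](subnK two_le) addn2.
exact: SL_tr_surj.
Qed.

Theorem proposition7 (s r : nat) (hs : (0 < s)%N) (hr : (0 < r)%N)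
    (F : finFieldType) (hF : #|F| = (2 ^ r)%N) :
  let n := (2 ^ s)%N in
  (forall a b : F, cword n r (a + b) = cword n r a + cword n r b) /\
  injective (cword n r (F := F)) /\
  (forall w : {ffun SL n F -> 'F_2},
      w \in codeCperp n F <-> exists a : F, cword n r a = w).
Proof.
move=> n; pose tau (g : SL n F) := \tr (val g).
have tau_surj t : exists g, tau g = t by apply: SL_pow2_tr_surj.
have cwordE : cword n r (F := F) = traceWord r tau by [].
have codeCperpE : codeCperp n F = dualCode (labelCode tau) by [].
rewrite cwordE codeCperpE (dual_labelCodeE hr hF tau_surj).
split; first exact: traceWordD hr hF.
split; first exact: traceWord_inj hr hF tau_surj.
by move=> w; split=> [/imsetP[a _ ->] | [a <-]]; [exists a | apply: imset_f].
Qed.
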